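(* Let $g:[1/2,1]\to\mathbb{R}$ be non-decreasing on $[1/2,1]$ with $g(1)\neq g(1/2)$. Then for any $a,b>0$, \[ a\sharp b+\frac{2}{g(1)-g\left(\frac12\right)}\left[\int_{1/2}^{1}g(t)H_t(a,b)\,dt-L(a,b)\int_{1/2}^{1}g(t)\,dt\right]\le a\nabla b . \]
   Context: For $a,b>0$: $a\sharp b=\sqrt{ab}$, $a\nabla b=\frac{a+b}{2}$, $a\sharp_t b=a^{1-t}b^{t}$. The Heinz mean is $H_t(a,b)=\frac{a\sharp_t b+b\sharp_t a}{2}$ for $0\le t\le1$, and the logarithmic mean is $L(a,b)=\frac{b-a}{\ln b-\ln a}$ for $a\neq b$, with the usual convention $L(a,a)=a$. *)

From Stdlib Require Import Reals.
From Coquelicot Require Import Coquelicot.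
Open Scope R_scope.

Definition geo_mean (a b : R) : R := sqrt (a * b).
Definition ari_mean (a b : R) : R := (a + b) / 2.
Definition wgeo_mean (t a b : R) : R := Rpower a (1 - t) * Rpower b t.
Definition heinz_mean (t a b : R) : R := (wgeo_mean t a b + wgeo_mean t b a) / 2.
Definition log_mean (a b : R) : R :=
  if Req_EM_T a b then a else (b - a) / (ln b - ln a).

From Stdlib Require Import Reals Lra ClassicalEpsilon.
From Coquelicot Require Import Coquelicot.
Open Scope R_scope.

(* Since the Heinz mean H_t integrates to L/2 over [1/2, 1], the bracket equals
   the integral of g(t) (H_t - L), which does not change when g is replaced by
   g - g(1/2), a function with values in [0, g(1) - g(1/2)].  As G <= H_t <= A,
   the integrand is then at most (g(1) - g(1/2)) (A - L), so the bracket is at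
   most (g(1) - g(1/2)) (A - L) / 2 <= (g(1) - g(1/2)) (A - G) / 2, using L >= G.
   The integrals exist because a monotone function times a Riemann-integrable one
   is Riemann integrable: the monotone factor is a uniform limit of staircases,
   whose level sets are intervals. *)

Definition nondecreasing_on (f : R -> R) (a b : R) : Prop :=
  forall x y, a <= x -> x <= y -> y <= b -> f x <= f y.

Lemma ex_RInt_uniform_approx (f : R -> R) (a b : R) :
  a <= b ->
  (forall eps : posreal, exists h,
     ex_RInt h a b /\ forall t, a <= t <= b -> Rabs (f t - h t) <= eps) ->
  ex_RInt f a b.
Proof.
  intros hab happrox. apply ex_RInt_Reals_1. intro eps.
  set (d := eps / (2 * (b - a + 1))).
  assert (hd : 0 < d) by (apply Rdiv_lt_0_compat; [apply cond_pos | lra]).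
  assert (hdba : d * (b - a) = eps / 2 - d) by (unfold d; field; lra).
  destruct (constructive_indefinite_description _ (happrox (mkposreal d hd))) as [h [hint hclose]].
  assert (he2 : 0 < eps / 2) by (apply Rdiv_lt_0_compat; [apply cond_pos | lra]).
  destruct (ex_RInt_Reals_0 _ _ _ hint (mkposreal _ he2)) as [phi [psi [hphi hpsi]]].
  rewrite Rmin_left, Rmax_right in hphi by lra.
  exists phi, (mkStepFun (StepFun_P28 1 psi (mkStepFun (StepFun_P4 a b d)))).
  split.
  - intros t ht. rewrite Rmin_left, Rmax_right in ht by lra.
    simpl. unfold fct_cte.
    replace (f t - phi t) with ((f t - h t) + (h t - phi t)) by ring.
    specialize (hclose t ht). specialize (hphi t ht). simpl in hclose.
    eapply Rle_trans; [apply Rabs_triang | lra].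
  - rewrite StepFun_P30, StepFun_P18, Rmult_1_l. simpl in hpsi.
    assert (0 <= d * (b - a)) by (apply Rmult_le_pos; lra).
    eapply Rle_lt_trans; [apply Rabs_triang|].
    rewrite (Rabs_right (d * (b - a))) by lra. lra.
Qed.

Lemma nondecreasing_on_threshold (f : R -> R) (a b c0 : R) :
  a <= b -> nondecreasing_on f a b ->
  exists c, a <= c <= b /\
    (forall t, a < t < c -> f t < c0) /\ (forall t, c < t <= b -> c0 <= f t).
Proof.
  intros hab hf.
  set (E := fun x => x = a \/ (a <= x <= b /\ f x < c0)).
  assert (hEb : bound E).
  { exists b. intros x [->|[hx _]]; lra. }
  destruct (completeness E hEb (ex_intro _ a (or_introl eq_refl))) as [c [hub hlub]].
  assert (hac : a <= c) by (apply hub; now left).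
  assert (hcb : c <= b) by (apply hlub; intros x [->|[hx _]]; lra).
  exists c. split; [lra|]. split.
  - intros t ht. apply Rnot_le_lt. intro hle.
    assert (c <= t); [|lra].
    apply hlub. intros y [->|[hy hfy]]; [lra|].
    apply Rnot_lt_le. intro hty.
    assert (f t <= f y) by (apply hf; lra). lra.
  - intros t ht. apply Rnot_lt_le. intro hlt.
    assert (t <= c) by (apply hub; right; split; [lra | exact hlt]). lra.
Qed.

Lemma ex_RInt_level_set (f k : R -> R) (a b c0 : R) :
  a <= b -> nondecreasing_on f a b -> ex_RInt k a b ->
  ex_RInt (fun t => if Rle_dec c0 (f t) then k t else 0) a b.
Proof.
  intros hab hf hk.
  destruct (nondecreasing_on_threshold f a b c0 hab hf) as [c [hc [hbelow habove]]].
  apply (ex_RInt_Chasles_0 _ a c b); [exact hc | |].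
  - apply (ex_RInt_ext (fun _ => 0)); [|apply ex_RInt_const].
    rewrite Rmin_left, Rmax_right by lra. intros t ht.
    specialize (hbelow t ht). destruct (Rle_dec c0 (f t)); [lra | reflexivity].
  - apply (ex_RInt_ext k); [|now apply (@ex_RInt_Chasles_2 R_CompleteNormedModule _ a)].
    rewrite Rmin_left, Rmax_right by lra. intros t ht.
    assert (c0 <= f t) by (apply habove; lra).
    destruct (Rle_dec c0 (f t)); [reflexivity | contradiction].
Qed.

Fixpoint staircase (e x : R) (n : nat) : R :=
  match n with
  | O => 0
  | S m => staircase e x m + (if Rle_dec (INR (S m) * e) x then e else 0)
  end.

Lemma staircase_invariant (e x : R) (n : nat) : 0 < e -> 0 <= x ->
  staircase e x n <= x /\ staircase e x n <= INR n * e /\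
  (x < staircase e x n + e \/ staircase e x n = INR n * e).
Proof.
  intros he hx. induction n as [|m [IHx [IHn IHeq]]].
  - simpl. split; [lra | split; [lra | right; ring]].
  - cbn [staircase]. rewrite S_INR.
    destruct (Rle_dec ((INR m + 1) * e) x) as [hle|hlt].
    + destruct IHeq as [IHeq|IHeq]; [lra|]. rewrite IHeq in *. lra.
    + split; [lra|]. split; [lra|].
      destruct IHeq as [IHeq|IHeq]; [left; lra|].
      left. rewrite IHeq. apply Rnot_le_lt in hlt. lra.
Qed.

Lemma staircase_approx (e x : R) (n : nat) :
  0 < e -> 0 <= x <= INR n * e -> 0 <= x - staircase e x n <= e.
Proof.
  intros he hx. destruct (staircase_invariant e x n he (proj1 hx)) as [h1 [h2 [h3|h3]]]; lra.
Qed.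

Lemma ex_RInt_staircase_mult (f k : R -> R) (a b e : R) (n : nat) :
  a <= b -> nondecreasing_on f a b -> ex_RInt k a b ->
  ex_RInt (fun t => staircase e (f t) n * k t) a b.
Proof.
  intros hab hf hk. induction n as [|m IH].
  - apply (ex_RInt_ext (fun _ => 0)); [intros; simpl; ring | apply ex_RInt_const].
  - apply (ex_RInt_ext (fun t => plus (staircase e (f t) m * k t)
             (scal e (if Rle_dec (INR (S m) * e) (f t) then k t else 0)))).
    + intros t _. simpl. unfold plus, scal; simpl; unfold mult; simpl.
      destruct (Rle_dec _ _); ring.
    + apply (@ex_RInt_plus R_NormedModule); [exact IH|].
      now apply (@ex_RInt_scal R_NormedModule), ex_RInt_level_set.
Qed.

Lemma ex_RInt_nondecreasing_mult (f k : R -> R) (a b : R) :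
  a <= b -> nondecreasing_on f a b -> ex_RInt k a b ->
  ex_RInt (fun t => f t * k t) a b.
Proof.
  intros hab hf hk.
  destruct (ex_RInt_ub k a b hk) as [M hM].
  rewrite Rmin_left, Rmax_right in hM by lra.
  set (f0 := fun t => f t - f a).
  assert (hf0 : nondecreasing_on f0 a b).
  { intros x y hx hxy hy. unfold f0. specialize (hf x y hx hxy hy). lra. }
  apply ex_RInt_uniform_approx; [exact hab|]. intros eps.
  set (K := Rabs M + 1).
  assert (hK : 0 < K) by (pose proof (Rabs_pos M); unfold K; lra).
  set (e := eps / K).
  assert (he : 0 < e) by (apply Rdiv_lt_0_compat; [apply cond_pos | exact hK]).
  destruct (INR_unbounded ((f b - f a) / e)) as [n hn].
  exists (fun t => plus (scal (f a) (k t)) (staircase e (f0 t) n * k t)).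
  split.
  - apply (@ex_RInt_plus R_NormedModule).
    + now apply (@ex_RInt_scal R_NormedModule).
    + now apply ex_RInt_staircase_mult.
  - intros t ht.
    assert (hkt : Rabs (k t) <= K).
    { specialize (hM t ht). change (Rabs (k t) <= M) in hM.
      pose proof (Rle_abs M). unfold K. lra. }
    assert (hrange : 0 <= f0 t <= INR n * e).
    { unfold f0. assert (f a <= f t <= f b) by (split; apply hf; lra).
      assert ((f b - f a) / e * e = f b - f a) by (field; lra).
      assert ((f b - f a) / e * e <= INR n * e) by (apply Rmult_le_compat_r; lra). lra. }
    destruct (staircase_approx e (f0 t) n he hrange) as [hlo hhi].
    replace (f t * k t - _) with ((f0 t - staircase e (f0 t) n) * k t)
      by (unfold f0, plus, scal; simpl; unfold mult; simpl; ring).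
    rewrite Rabs_mult, (Rabs_right (f0 t - _)) by lra.
    apply Rle_trans with (e * K).
    + apply Rmult_le_compat; [lra | apply Rabs_pos | lra | exact hkt].
    + unfold e. right. field. lra.
Qed.

Lemma ex_RInt_nondecreasing (f : R -> R) (a b : R) :
  a <= b -> nondecreasing_on f a b -> ex_RInt f a b.
Proof.
  intros hab hf. apply (ex_RInt_ext (fun t => f t * 1)); [intros; apply Rmult_1_r|].
  apply ex_RInt_nondecreasing_mult; [exact hab | exact hf | apply ex_RInt_const].
Qed.

Lemma wgeo_mean_exp (t a b : R) :
  wgeo_mean t a b = exp ((1 - t) * ln a + t * ln b).
Proof. unfold wgeo_mean, Rpower. now rewrite exp_plus. Qed.

Lemma wgeo_mean_le_weighted_ari (t a b : R) : 0 < a -> 0 < b -> 0 <= t <= 1 ->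
  wgeo_mean t a b <= (1 - t) * a + t * b.
Proof.
  intros ha hb ht. rewrite wgeo_mean_exp.
  set (m := (1 - t) * a + t * b).
  assert (hm : 0 < m).
  { unfold m. destruct (Req_dec t 1) as [->|ht1]; [lra|].
    assert (0 < (1 - t) * a) by (apply Rmult_lt_0_compat; lra).
    assert (0 <= t * b) by (apply Rmult_le_pos; lra). lra. }
  (* tangent line of exp at ln m, evaluated at ln a and ln b *)
  assert (tangent : forall x, 0 < x -> 1 + (ln x - ln m) <= x / m).
  { intros x hx. rewrite <- ln_div by auto. rewrite <- (exp_ln (x / m)) at 2.
    - apply exp_ineq1_le.
    - now apply Rdiv_lt_0_compat. }
  pose proof (tangent a ha) as hta. pose proof (tangent b hb) as htb.
  assert (hsum : (1 - t) * (a / m) + t * (b / m) = 1) by (unfold m in *; field; lra).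
  assert (hln : (1 - t) * ln a + t * ln b <= ln m).
  { pose proof (Rmult_le_compat_l (1 - t) _ _ ltac:(lra) hta).
    pose proof (Rmult_le_compat_l t _ _ ltac:(lra) htb). lra. }
  rewrite <- (exp_ln m hm).
  destruct hln as [hlt | ->]; [left; now apply exp_increasing | right; reflexivity].
Qed.

Lemma wgeo_mean_mul_swap (t a b : R) : 0 < a -> 0 < b ->
  wgeo_mean t a b * wgeo_mean t b a = a * b.
Proof.
  intros ha hb. rewrite !wgeo_mean_exp, <- exp_plus.
  replace (_ + _) with (ln a + ln b) by ring.
  now rewrite exp_plus, !exp_ln.
Qed.

Lemma heinz_mean_bounds (t a b : R) : 0 < a -> 0 < b -> 0 <= t <= 1 ->
  geo_mean a b <= heinz_mean t a b <= ari_mean a b.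
Proof.
  intros ha hb ht. unfold geo_mean, heinz_mean, ari_mean.
  pose proof (wgeo_mean_le_weighted_ari t a b ha hb ht).
  pose proof (wgeo_mean_le_weighted_ari t b a hb ha ht).
  rewrite <- (wgeo_mean_mul_swap t a b ha hb).
  set (x := wgeo_mean t a b) in *. set (y := wgeo_mean t b a) in *.
  assert (hx : 0 < x) by (unfold x; rewrite wgeo_mean_exp; apply exp_pos).
  assert (hy : 0 < y) by (unfold y; rewrite wgeo_mean_exp; apply exp_pos).
  split; [|lra].
  rewrite sqrt_mult by lra.
  pose proof (sqrt_sqrt x ltac:(lra)). pose proof (sqrt_sqrt y ltac:(lra)).
  pose proof (pow2_ge_0 (sqrt x - sqrt y)). nra.
Qed.

Lemma is_RInt_heinz_mean (a b : R) : 0 < a -> 0 < b ->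
  is_RInt (fun t => heinz_mean t a b) (1/2) 1 (log_mean a b / 2).
Proof.
  intros ha hb. unfold log_mean. destruct (Req_EM_T a b) as [<- | hab].
  - apply (is_RInt_ext (fun _ => a)).
    + intros t _. unfold heinz_mean. rewrite wgeo_mean_exp.
      replace ((1 - t) * ln a + t * ln a) with (ln a) by ring.
      rewrite exp_ln by exact ha. change (a = (a + a) / 2). field.
    + replace (a / 2) with (scal (1 - 1/2) a) by (unfold scal; simpl; unfold mult; simpl; field).
      apply (@is_RInt_const R_NormedModule).
  - assert (hln : ln b - ln a <> 0).
    { intro h. apply hab, ln_inv; auto. lra. }
    set (F := fun t => (wgeo_mean t a b - wgeo_mean t b a) / (2 * (ln b - ln a))).
    replace ((b - a) / (ln b - ln a) / 2) with (minus (F 1) (F (1/2))).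
    + apply (@is_RInt_derive R_CompleteNormedModule).
      * intros t _. unfold F, heinz_mean, wgeo_mean, Rpower.
        auto_derive; [exact I|]. replace (1 + - t) with (1 - t) by ring. field. exact hln.
      * intros t _. apply (ex_derive_continuous (fun t => heinz_mean t a b)).
        unfold heinz_mean, wgeo_mean, Rpower. auto_derive. exact I.
    + unfold minus, plus, opp, F, wgeo_mean; simpl.
      replace (1 - 1) with 0 by ring. replace (1 - 1/2) with (1/2) by field.
      rewrite !Rpower_O, !Rpower_1 by assumption. field. exact hln.
Qed.

Lemma log_mean_bounds (a b : R) : 0 < a -> 0 < b ->
  geo_mean a b <= log_mean a b <= ari_mean a b.
Proof.
  intros ha hb.
  pose proof (is_RInt_heinz_mean a b ha hb) as hH.
  assert (hG := @is_RInt_const R_NormedModule (1/2) 1 (geo_mean a b)).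
  assert (hA := @is_RInt_const R_NormedModule (1/2) 1 (ari_mean a b)).
  unfold scal in hG, hA; simpl in hG, hA; unfold mult in hG, hA; simpl in hG, hA.
  split.
  - cut ((1 - 1/2) * geo_mean a b <= log_mean a b / 2); [lra|].
    apply (is_RInt_le _ _ (1/2) 1 _ _ ltac:(lra) hG hH).
    intros t ht. destruct (heinz_mean_bounds t a b ha hb ltac:(lra)); lra.
  - cut (log_mean a b / 2 <= (1 - 1/2) * ari_mean a b); [lra|].
    apply (is_RInt_le _ _ (1/2) 1 _ _ ltac:(lra) hH hA).
    intros t ht. destruct (heinz_mean_bounds t a b ha hb ltac:(lra)); lra.
Qed.

Lemma RInt_nondecreasing_mult_le (g h : R -> R) (a b M : R) :
  a <= b -> nondecreasing_on g a b -> is_RInt h a b 0 ->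
  (forall t, a <= t <= b -> h t <= M) -> 0 <= M ->
  RInt (fun t => g t * h t) a b <= (g b - g a) * M * (b - a).
Proof.
  intros hab hg hh hM hM0.
  assert (hgh : ex_RInt (fun t => g t * h t) a b)
    by (apply ex_RInt_nondecreasing_mult; [exact hab | exact hg | exists 0; exact hh]).
  (* [g t h t <= g a h t + (g b - g a) M], and [h] has mean zero *)
  replace ((g b - g a) * M * (b - a))
    with (plus (scal (g a) 0) (scal (b - a) ((g b - g a) * M)))
    by (unfold plus, scal; simpl; unfold mult; simpl; ring).
  apply (is_RInt_le (fun t => g t * h t) (fun t => plus (scal (g a) (h t)) ((g b - g a) * M)) a b _ _ hab).
  - exact (RInt_correct _ _ _ hgh).
  - apply (@is_RInt_plus R_NormedModule).
    + now apply (@is_RInt_scal R_NormedModule).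
    + apply (@is_RInt_const R_NormedModule).
  - intros t ht. unfold plus, scal; simpl; unfold mult; simpl.
    assert (g a <= g t <= g b) by (split; apply hg; lra).
    specialize (hM t ltac:(lra)).
    assert (0 <= (g t - g a) * (M - h t)) by (apply Rmult_le_pos; lra).
    assert (0 <= (g b - g t) * M) by (apply Rmult_le_pos; lra).
    nra.
Qed.

Lemma RInt_mult_sub_const (g h : R -> R) (a b c : R) :
  ex_RInt g a b -> ex_RInt (fun t => g t * h t) a b ->
  RInt (fun t => g t * (h t - c)) a b = RInt (fun t => g t * h t) a b - c * RInt g a b.
Proof.
  intros hg hgh. apply is_RInt_unique.
  apply (is_RInt_ext (fun t => minus (g t * h t) (scal c (g t)))).
  - intros t _. unfold minus, plus, opp, scal; simpl; unfold mult; simpl. ring.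
  - apply (@is_RInt_minus R_NormedModule); [exact (RInt_correct _ _ _ hgh)|].
    apply (@is_RInt_scal R_NormedModule). exact (RInt_correct _ _ _ hg).
Qed.

Theorem theorem2p3 (g : R -> R)
  (g_mono : forall x y, 1/2 <= x -> x <= y -> y <= 1 -> g x <= g y)
  (g_ne : g 1 <> g (1/2))
  (a b : R) (ha : 0 < a) (hb : 0 < b) :
  geo_mean a b
    + 2 / (g 1 - g (1/2))
      * (RInt (fun t => g t * heinz_mean t a b) (1/2) 1
         - log_mean a b * RInt g (1/2) 1)
  <= ari_mean a b.
Proof.
  assert (hg : nondecreasing_on g (1/2) 1) by exact g_mono.
  set (D := g 1 - g (1/2)).
  assert (hD : 0 < D).
  { destruct (Rle_lt_or_eq _ _ (hg (1/2) 1 ltac:(lra) ltac:(lra) ltac:(lra))) as [hlt | heq];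
      [unfold D; lra | congruence]. }
  destruct (log_mean_bounds a b ha hb) as [hGL hLA].
  pose proof (is_RInt_heinz_mean a b ha hb) as hH.
  set (L := log_mean a b) in *.
  assert (hgint : ex_RInt g (1/2) 1) by (apply ex_RInt_nondecreasing; [lra | exact hg]).
  assert (hgH : ex_RInt (fun t => g t * heinz_mean t a b) (1/2) 1)
    by (apply ex_RInt_nondecreasing_mult; [lra | exact hg | eexists; exact hH]).
  rewrite <- (RInt_mult_sub_const g (fun t => heinz_mean t a b) _ _ L hgint hgH).
  assert (hbound : RInt (fun t => g t * (heinz_mean t a b - L)) (1/2) 1
                   <= D * (ari_mean a b - L) * (1 - 1/2)).
  { apply RInt_nondecreasing_mult_le; [lra | exact hg | | | lra].
    - replace 0 with (minus (L / 2) (scal (1 - 1/2) L))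
        by (unfold minus, plus, opp, scal; simpl; unfold mult; simpl; field).
      apply (@is_RInt_minus R_NormedModule); [exact hH | apply (@is_RInt_const R_NormedModule)].
    - intros t ht. destruct (heinz_mean_bounds t a b ha hb ltac:(lra)). lra. }
  assert (2 / D * RInt (fun t => g t * (heinz_mean t a b - L)) (1/2) 1 <= ari_mean a b - L).
  { apply Rle_trans with (2 / D * (D * (ari_mean a b - L) * (1 - 1/2))).
    - apply Rmult_le_compat_l; [apply Rlt_le, Rdiv_lt_0_compat; lra | exact hbound].
    - right. field. lra. }
  lra.
Qed.
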